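(* For $n\ge1$, let $X_n=K_4'^{\,\Box n}$ be the $n$-fold Cartesian product of $K_4'$ with itself. Then $\rho(X_n)=3n$ and $\lambda_1(X_n)=n$.
   Context: For a digraph $X$ (finite vertex set, arcs are ordered pairs of distinct vertices), $H(X)$ has $(u,v)$-entry $1$ if $uv$ and $vu$ are arcs, $i$ if only $uv$ is an arc, $-i$ if only $vu$ is an arc, and $0$ otherwise; $\lambda_1(X)$ is its largest eigenvalue and $\rho(X)$ the largest absolute value of an eigenvalue. $K_4'$ is the digraph on $x_1,x_2,x_3,x_4$ with arcs $x_1x_2,x_2x_3,x_3x_4,x_4x_1$ together with the digons $\{x_1,x_3\}$ and $\{x_2,x_4\}$ (i.e., both arcs $x_1x_3,x_3x_1$ and both $x_2x_4,x_4x_2$). The Cartesian product $X\,\Box\,Y$ has vertex set $V(X)\times V(Y)$ and an arc from $(x_1,y_1)$ to $(x_2,y_2)$ whenever either $x_1x_2$ is an arc of $X$ and $y_1=y_2$, or $y_1y_2$ is an arc of $Y$ and $x_1=x_2$. *)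

From HB Require Import structures.
From mathcomp Require Import all_boot all_order all_algebra.
From mathcomp Require Import algC.
Set Implicit Arguments. Unset Strict Implicit. Unset Printing Implicit Defensive.
Import Order.TTheory GRing.Theory Num.Theory.
Local Open Scope ring_scope.

Record digraph := Digraph { dvert : finType; darc : rel dvert }.

Definition hermadj (X : digraph) : 'M[algC]_#|dvert X| :=
  \matrix_(i, j)
    (let u := enum_val i in let v := enum_val j in
     if darc u v && darc v u then 1
     else if darc u v then 'i
     else if darc v u then - 'i
     else 0).

Definition is_lambda1 (m : nat) (A : 'M[algC]_m) (lam : algC) : Prop :=
  eigenvalue A lam /\ (forall mu, eigenvalue A mu -> mu <= lam).

Definition is_spectral_radius (m : nat) (A : 'M[algC]_m) (r : algC) : Prop :=
  (exists2 mu, eigenvalue A mu & `|mu| = r) /\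
  (forall mu, eigenvalue A mu -> `|mu| <= r).

Definition dcart (X Y : digraph) : digraph :=
  @Digraph (dvert X * dvert Y)%type
    (fun p q => (darc p.1 q.1 && (p.2 == q.2)) || (darc p.2 q.2 && (p.1 == q.1))).

(* K_4' on x1,x2,x3,x4 = 0,1,2,3 *)
Definition K4'_arc (u v : 'I_4) : bool :=
  let a := nat_of_ord u in let b := nat_of_ord v in
  [|| (a == 0) && (b == 1), (a == 1) && (b == 2), (a == 2) && (b == 3),
      (a == 3) && (b == 0),
      (a == 0) && (b == 2), (a == 2) && (b == 0),
      (a == 1) && (b == 3) | (a == 3) && (b == 1)]%N.

Definition K4' : digraph := @Digraph 'I_4 K4'_arc.

(* kpow m = K_4' box ... box K_4' with m+1 factors *)
Fixpoint kpow (m : nat) : digraph :=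
  match m with
  | 0 => K4'
  | m'.+1 => dcart (kpow m') K4'
  end.

Definition Xn (n : nat) : digraph := kpow n.-1.

From mathcomp Require Import all_boot all_order all_algebra algC.
From mathcomp Require Import ring zify.
Import Order.TTheory GRing.Theory Num.Theory.
Local Open Scope ring_scope.

(** The Hermitian adjacency matrix of [K_4'] satisfies [H^2 = 3 - 2 H], so its
    spectrum is [{1, -3}].  The matrix of a Cartesian product [X □ Y] acts on
    a function [f] on [V(X) * V(Y)] as the sum of two commuting operators, one
    acting along the [X]-fibres and one along the [Y]-fibres.  When the
    [Y]-operator satisfies [(B - a)(B - b) = 0] with [a != b], an eigenfunction
    [f] of the sum, of eigenvalue [mu], yields [(B - b) f] and [(B - a) f], one of
    which is nonzero and which are eigenfunctions of the [X]-operator for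
    [mu - a] and [mu - b]; restricting to a suitable fibre gives an
    eigenfunction of [X].  Hence the spectrum of [K_4'^n] lies in
    [{n - 4 k | k <= n}], and both extremes [n] and [-3 n] are attained by
    products of eigenfunctions. *)

Definition hadj {X : digraph} (u v : dvert X) : algC :=
  if darc u v && darc v u then 1
  else if darc u v then 'i
  else if darc v u then - 'i
  else 0.

Definition hmul {X : digraph} (f : dvert X -> algC) (v : dvert X) : algC :=
  \sum_u f u * hadj u v.

Definition heigen (X : digraph) (mu : algC) : Prop :=
  exists2 f : dvert X -> algC, (forall v, hmul f v = mu * f v) & exists x, f x != 0.

Definition loopless (X : digraph) : Prop := forall x : dvert X, darc x x = false.

Lemma hermadjE X i j : hermadj X i j = hadj (enum_val i) (enum_val j).
Proof. by rewrite mxE. Qed.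

Lemma eigenvalue_hermadjP X mu : eigenvalue (hermadj X) mu <-> heigen X mu.
Proof.
have bij : bijective (@enum_rank (dvert X)).
  by exists enum_val; [apply: enum_rankK | apply: enum_valK].
split.
  move/eigenvalueP => [v Hv vn0].
  exists (fun u => v 0 (enum_rank u)).
    move=> w; have := congr1 (fun M : 'rV_ _ => M 0 (enum_rank w)) Hv => /=.
    rewrite !mxE (reindex _ (onW_bij _ bij)) /= => <-.
    by apply: eq_bigr => u _; rewrite hermadjE !enum_rankK.
  have [j vj] : exists j, v 0 j != 0.
    apply/existsP; move: vn0; apply: contraR; rewrite negb_exists => /forallP H.
    by apply/eqP/rowP => j; rewrite mxE; move: (H j); rewrite negbK => /eqP.
  by exists (enum_val j); rewrite enum_valK.
move=> [f Hf [x fx]]; apply/eigenvalueP.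
exists (\row_j f (enum_val j)).
  apply/rowP => k; rewrite !mxE (reindex _ (onW_bij _ bij)) /= -Hf.
  by apply: eq_bigr => u _; rewrite !mxE !enum_rankK.
apply/negP => /eqP v0; have := congr1 (fun M : 'rV_ _ => M 0 (enum_rank x)) v0.
by rewrite !mxE enum_rankK; apply/eqP.
Qed.

Lemma hmul_ext {X} {f g : dvert X -> algC} v : f =1 g -> hmul f v = hmul g v.
Proof. by move=> fg; apply: eq_bigr => u _; rewrite fg. Qed.

Lemma hmulZ {X} (f : dvert X -> algC) c v : hmul (fun u => c * f u) v = c * hmul f v.
Proof. by rewrite /hmul mulr_sumr; apply: eq_bigr => u _; rewrite mulrA. Qed.

Lemma hmul_lincomb {X} (f g : dvert X -> algC) al be v :
  hmul (fun u => al * f u + be * g u) v = al * hmul f v + be * hmul g v.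
Proof. by rewrite /hmul !mulr_sumr -big_split; apply: eq_bigr => u _ /=; ring. Qed.

Section QuadraticAdjacency.

Context {X : digraph} {a b : algC}.
Hypothesis hadj_sqr : forall u w : dvert X,
  \sum_v hadj u v * hadj v w = (a + b) * hadj u w - a * b * (u == w)%:R.

Lemma hmul_sqr (f : dvert X -> algC) v : hmul (hmul f) v = (a + b) * hmul f v - a * b * f v.
Proof.
rewrite /hmul; under eq_bigr => u _ do rewrite mulr_suml.
rewrite exchange_big /=.
under eq_bigr => w _ do
  (under eq_bigr => u _ do rewrite -mulrA; rewrite -mulr_sumr hadj_sqr).
under eq_bigr => w _ do rewrite mulrBr.
rewrite sumrB mulr_sumr; congr (_ - _); first by apply: eq_bigr => w _; ring.
rewrite (bigD1 v) //= eqxx big1 => [|w /negbTE ->]; last by rewrite !mulr0.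
by rewrite addr0 mulr1 mulrC.
Qed.

Lemma heigen_quadratic mu : heigen X mu -> mu = a \/ mu = b.
Proof.
move=> [f Hf [x fx]].
have : (mu - a) * (mu - b) * f x = 0.
  have hmul2 : (a + b) * (mu * f x) - a * b * f x = mu * (mu * f x).
    by rewrite -Hf -hmul_sqr (hmul_ext x Hf) hmulZ.
  have -> : (mu - a) * (mu - b) * f x =
            mu * (mu * f x) - ((a + b) * (mu * f x) - a * b * f x) by ring.
  by rewrite hmul2 subrr.
move/eqP; rewrite !mulf_eq0 (negbTE fx) orbF !subr_eq0.
by case/orP => /eqP; [left | right].
Qed.

End QuadraticAdjacency.

Section CartesianProduct.

Context {X Y : digraph}.
Hypotheses (loopX : loopless X) (loopY : loopless Y).

Lemma hadj_dcart (a c : dvert X) (b d : dvert Y) :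
  @hadj (dcart X Y) (a, b) (c, d) =
    (b == d)%:R * hadj a c + (a == c)%:R * hadj b d.
Proof.
rewrite /hadj /=.
case: (eqVneq b d) => [<-|_]; case: (eqVneq a c) => [<-|_];
  by rewrite ?loopX ?loopY /= ?andbT ?andbF ?orbF ?mul1r ?mul0r ?addr0 ?add0r.
Qed.

Lemma hmul_dcart (f : dvert X * dvert Y -> algC) c d :
  @hmul (dcart X Y) f (c, d) =
  hmul (fun a => f (a, d)) c + hmul (fun b => f (c, b)) d.
Proof.
rewrite /hmul [LHS](_ : _ = \sum_a \sum_b f (a, b) * @hadj (dcart X Y) (a, b) (c, d)).
  2: by rewrite pair_big /=; apply: eq_bigr => -[].
under eq_bigr => a _ do under eq_bigr => b _ do rewrite hadj_dcart mulrDr.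
under eq_bigr => a _ do rewrite big_split /=.
rewrite big_split /=; congr (_ + _).
  apply: eq_bigr => a _; rewrite (bigD1 d) //= eqxx mul1r big1 ?addr0 //.
  by move=> b /negbTE ->; rewrite mul0r mulr0.
rewrite exchange_big /=; apply: eq_bigr => b _.
rewrite (bigD1 c) //= eqxx mul1r big1 ?addr0 //.
by move=> a /negbTE ->; rewrite mul0r mulr0.
Qed.

Lemma heigen_dcart {la lb} : heigen X la -> heigen Y lb -> heigen (dcart X Y) (la + lb).
Proof.
move=> [g Hg [x gx]] [k Hk [y ky]].
exists (fun p : dvert X * dvert Y => g p.1 * k p.2); last first.
  by exists (x, y); rewrite mulf_neq0.
move=> [c d]; rewrite hmul_dcart /=.
rewrite (hmul_ext c (g := fun u => k d * g u)) => [|u]; last exact: mulrC.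
by rewrite !hmulZ Hg Hk; ring.
Qed.

Let hmulX (f : dvert X * dvert Y -> algC) p := hmul (fun a => f (a, p.2)) p.1.
Let hmulY (f : dvert X * dvert Y -> algC) p := hmul (fun b => f (p.1, b)) p.2.

Let hmulXY f p : hmulX (hmulY f) p = hmulY (hmulX f) p.
Proof.
rewrite /hmulX /hmulY /hmul /=.
under eq_bigr => a _ do rewrite mulr_suml.
under [RHS]eq_bigr => b _ do rewrite mulr_suml.
by rewrite exchange_big /=; apply: eq_bigr => b _; apply: eq_bigr => a _; ring.
Qed.

Context {a b : algC}.
Hypothesis hadjY_sqr : forall u w : dvert Y,
  \sum_v hadj u v * hadj v w = (a + b) * hadj u w - a * b * (u == w)%:R.

Lemma heigen_dcart_inv mu : a != b ->
  heigen (dcart X Y) mu -> heigen X (mu - a) \/ heigen X (mu - b).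
Proof.
move=> neq_ab [f Hf [x fx]].
have hmulXf p : hmulX f p = mu * f p - hmulY f p.
  by rewrite -Hf; case: p => c d; rewrite hmul_dcart addrK.
have hmulYX p : hmulY (hmulX f) p = mu * hmulY f p - hmulY (hmulY f) p.
  rewrite /hmulY (hmul_ext _ (g := fun b => mu * f (p.1, b) + (-1) * hmulY f (p.1, b))).
    by rewrite hmul_lincomb; ring.
  by move=> v; rewrite hmulXf; ring.
have hmulYY p : hmulY (hmulY f) p = (a + b) * hmulY f p - a * b * f p.
  by case: p => c d; exact: (hmul_sqr hadjY_sqr (fun v => f (c, v)) d).
(* [(B - c') f] is a [c]-eigenfunction of the [Y]-operator [B], hence a
   [(mu - c)]-eigenfunction of the [X]-operator. *)
pose proj c' q := hmulY f q - c' * f q.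
have proj_eigen c c' : c + c' = a + b -> c * c' = a * b ->
  forall p, hmulX (proj c') p = (mu - c) * proj c' p.
  move=> sum_cc' prod_cc' p.
  have -> : hmulX (proj c') p = hmulX (hmulY f) p + (- c') * hmulX f p.
    rewrite -[hmulX (hmulY f) p]mul1r /hmulX -hmul_lincomb.
    by apply: hmul_ext => v; rewrite /proj; ring.
  rewrite hmulXY hmulYX hmulXf hmulYY /proj.
  by rewrite -sum_cc' -prod_cc'; ring.
have [proj_b0|proj_bx] := eqVneq (proj b x) 0; last first.
  left; exists (fun c => proj b (c, x.2)); last by exists x.1; case: x proj_bx {fx}.
  by move=> c; apply: (proj_eigen a b (erefl _) (erefl _) (c, x.2)).
right; exists (fun c => proj a (c, x.2)); last first.
  exists x.1; case: x fx proj_b0 => /= c d fx proj_b0.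
  apply: contra_neq neq_ab; rewrite /proj in proj_b0 * => proj_a0.
  apply: (mulIf fx); apply/eqP; rewrite -subr_eq0.
  have -> : a * f (c, d) - b * f (c, d) = - (hmulY f (c, d) - a * f (c, d)) +
    (hmulY f (c, d) - b * f (c, d)) by ring.
  by rewrite proj_a0 proj_b0 oppr0 addr0.
by move=> c; apply: (proj_eigen b a (addrC _ _) (mulrC _ _) (c, x.2)).
Qed.

End CartesianProduct.

Lemma loopless_dcart X Y : loopless X -> loopless Y -> loopless (dcart X Y).
Proof. by move=> hX hY [u v]; rewrite /= hX hY. Qed.

Lemma loopless_K4' : loopless K4'.
Proof. by case=> [[|[|[|[|x]]]] Hx]. Qed.

Lemma loopless_kpow m : loopless (kpow m).
Proof.
by elim: m => [|m IH] /=; [exact: loopless_K4' | exact: loopless_dcart IH loopless_K4'].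
Qed.

Lemma hadj_K4'_sqr (u w : dvert K4') :
  \sum_v hadj u v * hadj v w = (1 + -3) * hadj u w - 1 * -3 * (u == w)%:R.
Proof.
rewrite !big_ord_recl big_ord0 /hadj /=.
case: u => [[|[|[|[|u]]]] Hu]; case: w => [[|[|[|[|w]]]] Hw] //=;
  by rewrite /bump /= ?mulrN ?mulNr ?opprK ?mulCii ?mulr0 ?mul0r ?mulr1 ?mul1r; ring.
Qed.

Lemma heigen_K4'_1 : heigen K4' 1.
Proof.
exists (fun _ => 1); last by exists ord0; rewrite oner_neq0.
move=> v; rewrite /hmul !big_ord_recl big_ord0 /hadj /=.
by case: v => [[|[|[|[|v]]]] Hv] //=; rewrite /bump /= ?mulr0 ?mul1r ?mulr1; ring.
Qed.

Lemma heigen_K4'_N3 : heigen K4' (-3).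
Proof.
exists (fun u : 'I_4 => match val u with 0 => 1 | 1 => - 'i | 2 => -1 | _ => 'i end).
  move=> v; rewrite /hmul !big_ord_recl big_ord0 /hadj /=.
  case: v => [[|[|[|[|v]]]] Hv] //=;
  by rewrite /bump /= ?mulrN ?mulNr ?opprK ?mulCii ?mulr0 ?mul0r ?mulr1 ?mul1r; ring.
by exists ord0; rewrite oner_neq0.
Qed.

Lemma heigen_kpow_inv m mu : heigen (kpow m) mu ->
  exists2 k, (k <= m.+1)%N & mu = m.+1%:R - (4 * k)%:R.
Proof.
have neq_1N3 : (1 : algC) != -3 by rewrite gt_eqF // (@lt_le_trans _ _ 0) ?oppr_lt0 ?ler01.
elim: m mu => [|m IH] mu /=.
  case/(heigen_quadratic hadj_K4'_sqr) => ->; first by exists 0%N; rewrite ?subr0.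
  by exists 1%N => //; ring.
case/(heigen_dcart_inv (loopless_kpow m) loopless_K4' hadj_K4'_sqr mu neq_1N3).
  case/IH => k le_km E; exists k; first exact: leqW.
  by rewrite -(subrK 1 mu) E -[m.+2]addn1 natrD; ring.
case/IH => k le_km E; exists k.+1 => //.
by rewrite -(subrK (-3) mu) E mulnS natrD -[m.+2]addn1 natrD; ring.
Qed.

Lemma heigen_kpow_max m : heigen (kpow m) m.+1%:R.
Proof.
elim: m => [|m IH] /=; first exact: heigen_K4'_1.
rewrite -[m.+2]addn1 natrD.
by apply: (heigen_dcart (loopless_kpow m) loopless_K4' IH); exact: heigen_K4'_1.
Qed.

Lemma heigen_kpow_min m : heigen (kpow m) (- (3 * m.+1)%:R).
Proof.
elim: m => [|m IH] /=; first exact: heigen_K4'_N3.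
have -> : - (3 * m.+2)%:R = - (3 * m.+1)%:R + -3 :> algC.
  by rewrite -[m.+2]addn1 !natrM natrD; ring.
by apply: (heigen_dcart (loopless_kpow m) loopless_K4' IH); exact: heigen_K4'_N3.
Qed.

Theorem proposition5p5 (n : nat) (hn : (1 <= n)%N) :
  is_spectral_radius (hermadj (Xn n)) (3 * n)%:R /\
  is_lambda1 (hermadj (Xn n)) n%:R.
Proof.
rewrite /Xn; case: n hn => [//|m] _ /=.
split; split.
- exists (- (3 * m.+1)%:R); first exact/eigenvalue_hermadjP/heigen_kpow_min.
  by rewrite normrN normr_nat.
- move=> mu /eigenvalue_hermadjP /heigen_kpow_inv [k le_km ->].
  by rewrite !pmulrn -intrB -intr_norm ler_int; lia.
- exact/eigenvalue_hermadjP/heigen_kpow_max.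
- move=> mu /eigenvalue_hermadjP /heigen_kpow_inv [k _ ->].
  by rewrite gerBl ler0n.
Qed.
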